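(* Let $\mathcal{S}=\{S_1,\dots,S_N\}\subseteq 2^{[n]}$ be a Sperner family and $h:\mathcal{S}\to 2^{[n]}$ a function with $H_i=h(S_i)\subseteq S_i$ for every $i\in[N]$. If the graph $G_{\mathcal{S},h}$ has a vertex of degree at most $1$, then there exists $S_0\in\mathcal{S}$ such that $\mathcal{Q}_{S_0,h(S_0)}\not\subseteq\bigcup_{S\in\mathcal{S}\setminus\{S_0\}}\mathcal{Q}_{S,h(S)}$.
   Context: $[n]=\{1,\dots,n\}$. A Sperner family is a family of sets none of which is contained in another. For $H\subseteq S\subseteq[n]$, $\mathcal{Q}_{S,H}=\{H\cup B: B\subseteq[n]\setminus S\}$. The graph $G_{\mathcal{S},h}$ has vertex set $\{(S_i,H_i): i\in[N]\}$, and two distinct vertices $(S_i,H_i)$, $(S_j,H_j)$ are adjacent if and only if $S_i\cap H_j=S_j\cap H_i$. *)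

From mathcomp Require Import all_boot.
Set Implicit Arguments. Unset Strict Implicit. Unset Printing Implicit Defensive.

(* The ground set [n] = {1..n} is represented by 'I_n. *)

Definition sperner (n : nat) (F : {set {set 'I_n}}) : Prop :=
  forall A B, A \in F -> B \in F -> A \subset B -> A = B.

Definition Qfam (n : nat) (S H : {set 'I_n}) : {set {set 'I_n}} :=
  [set H :|: B | B in powerset (~: S)].

Definition Gadj (n : nat) (h : {set 'I_n} -> {set 'I_n}) (S T : {set 'I_n}) : bool :=
  (S != T) && (S :&: h T == T :&: h S).

Definition Gdeg (n : nat) (F : {set {set 'I_n}}) (h : {set 'I_n} -> {set 'I_n})
  (S : {set 'I_n}) : nat :=
  #|[set T in F | Gadj h S T]|.

(* A set X in Q_{S,h(S)} meets S exactly in h(S), so if it also lies in Q_{T,h(T)}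
   then S ∩ h(T) = S ∩ T ∩ X = T ∩ h(S): the families Q_{S,h(S)} and Q_{T,h(T)} can
   only meet when (S,h(S)) and (T,h(T)) are adjacent.  Take S of degree at most 1.
   If S has a neighbour T, then T ⊄ S by the Sperner property; for t ∈ T \ S,
   choosing whether t ∈ X opposite to whether t ∈ h(T) gives an X in Q_{S,h(S)}
   outside Q_{T,h(T)}, hence outside every other Q_{T',h(T')}. *)

From mathcomp Require Import all_boot.

Section Qfam.

Set Implicit Arguments.
Unset Strict Implicit.

Variable n : nat.
Implicit Types S T H K X B : {set 'I_n}.

Lemma mem_Qfam S H B : B \subset ~: S -> H :|: B \in Qfam S H.
Proof. by move=> BS; apply/imsetP; exists B; rewrite ?inE. Qed.

Lemma setI_Qfam S H X : H \subset S -> X \in Qfam S H -> X :&: S = H.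
Proof.
move=> HS /imsetP [B]; rewrite inE -disjoints_subset => /disjoint_setI0 BS0 ->.
by rewrite setIUl (setIidPl HS) BS0 setU0.
Qed.

Lemma Gadj_Qfam (h : {set 'I_n} -> {set 'I_n}) S T X :
    h S \subset S -> h T \subset T -> S != T ->
  X \in Qfam S (h S) -> X \in Qfam T (h T) -> Gadj h S T.
Proof.
move=> hSS hTT neST XS XT.
rewrite /Gadj neST /= -(setI_Qfam hSS XS) -(setI_Qfam hTT XT).
by rewrite setICA [T :&: _]setICA [T :&: S]setIC.
Qed.

Lemma Qfam_notin S H T K :
    H \subset S -> K \subset T -> ~~ (T \subset S) ->
  exists2 X, X \in Qfam S H & X \notin Qfam T K.
Proof.
move=> HS KT /subsetPn [t tT tS].
have tSc : [set t] :\: K \subset ~: S by rewrite (subset_trans (subsetDl _ _)) // sub1set inE.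
exists (H :|: ([set t] :\: K)); first exact: mem_Qfam.
have tH : t \notin H by apply: contra tS; apply/subsetP.
apply/negP => /(setI_Qfam KT) /setP /(_ t).
by rewrite !inE tT (negbTE tH) eqxx /= !andbT; case: (t \in K).
Qed.

Lemma Qfam_avoid S H (N : {set {set 'I_n}}) (k : {set 'I_n} -> {set 'I_n}) :
    #|N| <= 1 -> H \subset S ->
    {in N, forall T, k T \subset T} -> {in N, forall T, ~~ (T \subset S)} ->
  exists2 X, X \in Qfam S H & {in N, forall T, X \notin Qfam T (k T)}.
Proof.
move=> /card_le1_eqP N1 HS kN SN; have [-> | [T TN]] := set_0Vmem N.
  by exists (H :|: set0); [apply: mem_Qfam; apply: sub0set | move=> T; rewrite inE].
have [X XS XT] := Qfam_notin HS (kN T TN) (SN T TN).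
by exists X => // T' T'N; rewrite (N1 T T' TN T'N).
Qed.

End Qfam.

Lemma sperner_not_subset n (F : {set {set 'I_n}}) S T :
  sperner F -> S \in F -> T \in F -> T != S -> ~~ (T \subset S).
Proof. by move=> spF SF TF; apply: contra => /(spF _ _ TF SF) ->. Qed.

Theorem claim19 (n : nat) (F : {set {set 'I_n}}) (h : {set 'I_n} -> {set 'I_n}) :
  sperner F ->
  (forall S, S \in F -> h S \subset S) ->
  (exists2 S, S \in F & Gdeg F h S <= 1) ->
  exists2 S0, S0 \in F &
    ~~ (Qfam S0 (h S0) \subset \bigcup_(S in F | S != S0) Qfam S (h S)).
Proof.
move=> spF hF [S SF degS]; exists S => //.
set N := [set T in F | Gadj h S T].
have hN : {in N, forall T, h T \subset T} by move=> T /setIdP [/hF].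
have notsubN : {in N, forall T : {set 'I_n}, ~~ (T \subset S)}.
  move=> T /setIdP [TF /andP [neST _]].
  by apply: (sperner_not_subset spF SF TF); rewrite eq_sym.
have [X XS XN] := Qfam_avoid degS (hF S SF) hN notsubN.
apply/subsetPn; exists X => //; apply/bigcupP => [[T /andP [TF neTS] XT]].
have TN : T \in N.
  by rewrite inE TF (Gadj_Qfam (hF S SF) (hF T TF) _ XS XT) // eq_sym.
by move: (XN T TN); rewrite XT.
Qed.
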